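(* Let $M=(\mathcal{C},\mathcal{Q},p,q_0,q_f)$ be a nondeterministic finite-state automaton over a category. Then $\mathcal{W}(M)=(\mathcal{W}(\mathcal{C}),\mathcal{W}(\mathcal{Q}),\mathcal{W}(p),(q_0,q_f))$ is a nondeterministic finite-state automaton over an operad, and the language of constants it recognizes equals the language of arrows recognized by $M$ (identifying constants of $\mathcal{W}(\mathcal{C})$ of color $(A,B)$ with arrows $A\to B$ of $\mathcal{C}$).
   Context: Composition in categories is written diagrammatically. A functor of categories $p$ is ULF if for every arrow $\alpha$ and arrows $u,v$ with $p(\alpha)=uv$ there is a unique pair $\beta,\gamma$ with $\alpha=\beta\gamma$, $p(\beta)=u$, $p(\gamma)=v$; a functor of (colored, non-symmetric) operads $p$ is ULF if for every operation $\alpha$ and $g,h,i$ with $p(\alpha)=g\circ_i h$ there is a unique pair $\beta,\gamma$ with $\alpha=\beta\circ_i\gamma$, $p(\beta)=g$, $p(\gamma)=h$. A functor is finitary if its fibers over every object/color and every arrow/operation are finite. A nondeterministic finite-state automaton over a category is a tuple $(\mathcal{C},\mathcal{Q},p,q_0,q_f)$ with $p:\mathcal{Q}\to\mathcal{C}$ finitary ULF and $q_0,q_f$ objects of $\mathcal{Q}$; it recognizes $\{p(\alpha)\mid\alpha:q_0\to q_f\}\subseteq\mathcal{C}(p(q_0),p(q_f))$. A nondeterministic finite-state automaton over an operad is a tuple $(\mathcal{O},\mathcal{Q},p,q_r)$ with $p:\mathcal{Q}\to\mathcal{O}$ a finitary ULF functor of operads and $q_r$ a color of $\mathcal{Q}$;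 it recognizes the set $\{p(\alpha)\mid \alpha \text{ a constant (nullary operation) of } \mathcal{Q} \text{ of color } q_r\}$. The operad of spliced arrows $\mathcal{W}(\mathcal{C})$ has colors pairs $(A,B)$ of objects of $\mathcal{C}$; $n$-ary operations $(A_1,B_1),\dots,(A_n,B_n)\to(A,B)$ are sequences $w_0\text{-}\cdots\text{-}w_n$ with $w_0:A\to A_1$, $w_i:B_i\to A_{i+1}$ ($1\le i<n$), $w_n:B_n\to B$ (for $n=0$ a single arrow $A\to B$); partial composition is $(w_0\text{-}\cdots\text{-}w_n)\circ_i(u_0\text{-}\cdots\text{-}u_m)=w_0\text{-}\cdots\text{-}w_{i-2}\text{-}(w_{i-1}u_0)\text{-}u_1\text{-}\cdots\text{-}u_{m-1}\text{-}(u_mw_i)\text{-}w_{i+1}\text{-}\cdots\text{-}w_n$ with identities $\mathrm{id}_A\text{-}\mathrm{id}_B$; $\mathcal{W}(p)$ applies $p$ componentwise to colors and arrows. *)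

From Stdlib Require Import List Arith.
Import ListNotations.
Set Implicit Arguments.

(** * Categories (two-sorted presentation; composition is diagrammatic:
      [comp f g] is "f then g", defined when [tgt f = src g]). *)
Record CatData := {
  Ob : Type;
  Ar : Type;
  src : Ar -> Ob;
  tgt : Ar -> Ob;
  idc : Ob -> Ar;
  comp : Ar -> Ar -> Ar
}.
Arguments src {c}. Arguments tgt {c}. Arguments idc {c}. Arguments comp {c}.

Definition IsCategory (C : CatData) : Prop :=
  (forall A : Ob C, src (idc A) = A /\ tgt (idc A) = A) /\
  (forall f g : Ar C, tgt f = src g -> src (comp f g) = src f /\ tgt (comp f g) = tgt g) /\
  (forall f : Ar C, comp (idc (src f)) f = f) /\
  (forall f : Ar C, comp f (idc (tgt f)) = f) /\
  (forall f g h : Ar C, tgt f = src g -> tgt g = src h ->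
      comp (comp f g) h = comp f (comp g h)).

Record CatFunData (C D : CatData) := {
  fo : Ob C -> Ob D;
  fa : Ar C -> Ar D
}.
Arguments fo {C D}. Arguments fa {C D}.

Definition IsCatFunctor (C D : CatData) (F : CatFunData C D) : Prop :=
  (forall f : Ar C, src (fa F f) = fo F (src f) /\ tgt (fa F f) = fo F (tgt f)) /\
  (forall A : Ob C, fa F (idc A) = idc (fo F A)) /\
  (forall f g : Ar C, tgt f = src g -> fa F (comp f g) = comp (fa F f) (fa F g)).

Definition CatULF (Q C : CatData) (p : CatFunData Q C) : Prop :=
  forall (alpha : Ar Q) (u v : Ar C), tgt u = src v -> fa p alpha = comp u v ->
    exists! bg : Ar Q * Ar Q,
      tgt (fst bg) = src (snd bg) /\ alpha = comp (fst bg) (snd bg) /\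
      fa p (fst bg) = u /\ fa p (snd bg) = v.

Definition CatFinitary (Q C : CatData) (p : CatFunData Q C) : Prop :=
  (forall A : Ob C, exists l : list (Ob Q), forall X, fo p X = A -> In X l) /\
  (forall f : Ar C, exists l : list (Ar Q), forall alpha, fa p alpha = f -> In alpha l).

Record CatNFA := {
  nC : CatData;
  nQ : CatData;
  np : CatFunData nQ nC;
  nC_cat : IsCategory nC;
  nQ_cat : IsCategory nQ;
  np_fun : IsCatFunctor np;
  np_ulf : CatULF np;
  np_fin : CatFinitary np;
  nq0 : Ob nQ;
  nqf : Ob nQ
}.

Definition cat_lang (M : CatNFA) (f : Ar (nC M)) : Prop :=
  exists alpha : Ar (nQ M),
    src alpha = nq0 M /\ tgt alpha = nqf M /\ fa (np M) alpha = f.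

(** An operation [g] has output color [out g] and input colors [ins g];
      [ocomp g i h] is g o_(i+1) h  (the index [i] is 0-based). *)
Record OperadData := {
  Col : Type;
  Opr : Type;
  out : Opr -> Col;
  ins : Opr -> list Col;
  oid : Col -> Opr;
  ocomp : Opr -> nat -> Opr -> Opr
}.
Arguments out {o}. Arguments ins {o}. Arguments oid {o}. Arguments ocomp {o}.

Definition composable {O : OperadData} (g : Opr O) (i : nat) (h : Opr O) : Prop :=
  i < length (ins g) /\ out h = nth i (ins g) (out h).

Definition IsOperad (O : OperadData) : Prop :=
  (forall c : Col O, out (oid c) = c /\ ins (oid c) = [c]) /\
  (forall (g : Opr O) i h, composable g i h ->
     out (ocomp g i h) = out g /\
     ins (ocomp g i h) = firstn i (ins g) ++ ins h ++ skipn (S i) (ins g)) /\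
  (forall g : Opr O, ocomp (oid (out g)) 0 g = g) /\
  (forall (g : Opr O) i, i < length (ins g) ->
     ocomp g i (oid (nth i (ins g) (out g))) = g) /\
  (forall (g h k : Opr O) i j, composable g i h -> composable h j k ->
     ocomp (ocomp g i h) (i + j) k = ocomp g i (ocomp h j k)) /\
  (forall (g h k : Opr O) i j, composable g i h -> composable g j k -> i < j ->
     ocomp (ocomp g j k) i h = ocomp (ocomp g i h) (j - 1 + length (ins h)) k).

Record OpFunData (O P : OperadData) := {
  fc : Col O -> Col P;
  fop : Opr O -> Opr P
}.
Arguments fc {O P}. Arguments fop {O P}.

Definition IsOpFunctor (O P : OperadData) (F : OpFunData O P) : Prop :=
  (forall a : Opr O, out (fop F a) = fc F (out a) /\ ins (fop F a) = map (fc F) (ins a)) /\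
  (forall c : Col O, fop F (oid c) = oid (fc F c)) /\
  (forall (g : Opr O) i h, composable g i h -> fop F (ocomp g i h) = ocomp (fop F g) i (fop F h)).

Definition OpULF (Q O : OperadData) (p : OpFunData Q O) : Prop :=
  forall (alpha : Opr Q) (g h : Opr O) (i : nat), composable g i h ->
    fop p alpha = ocomp g i h ->
    exists! bg : Opr Q * Opr Q,
      composable (fst bg) i (snd bg) /\ alpha = ocomp (fst bg) i (snd bg) /\
      fop p (fst bg) = g /\ fop p (snd bg) = h.

Definition OpFinitary (Q O : OperadData) (p : OpFunData Q O) : Prop :=
  (forall c : Col O, exists l : list (Col Q), forall X, fc p X = c -> In X l) /\
  (forall g : Opr O, exists l : list (Opr Q), forall alpha, fop p alpha = g -> In alpha l).

Definition IsOpNFA (O Q : OperadData) (p : OpFunData Q O) (qr : Col Q) : Prop :=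
  IsOperad O /\ IsOperad Q /\ IsOpFunctor p /\ OpULF p /\ OpFinitary p.

Definition op_lang (O Q : OperadData) (p : OpFunData Q O) (qr : Col Q) (x : Opr O) : Prop :=
  exists alpha : Opr Q, ins alpha = [] /\ out alpha = qr /\ fop p alpha = x.

(** An operation w0-w1-...-wn is the nonempty list of arrows (w0, [w1;...;wn]);
      its colors are determined by the arrows: output (src w0, tgt wn),
      inputs (tgt w_(k-1), src w_k) for k = 1..n. *)
Section Spliced.
Variable C : CatData.

Definition WOp := (Ar C * list (Ar C))%type.

Fixpoint last_ar (w : Ar C) (ws : list (Ar C)) : Ar C :=
  match ws with [] => w | w' :: ws' => last_ar w' ws' end.

Fixpoint ins_aux (w : Ar C) (ws : list (Ar C)) : list (Ob C * Ob C) :=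
  match ws with [] => [] | w' :: ws' => (tgt w, src w') :: ins_aux w' ws' end.

Definition Wout (x : WOp) : Ob C * Ob C := (src (fst x), tgt (last_ar (fst x) (snd x))).
Definition Wins (x : WOp) : list (Ob C * Ob C) := ins_aux (fst x) (snd x).
Definition Wid (c : Ob C * Ob C) : WOp := (idc (fst c), [idc (snd c)]).

Definition tolist (x : WOp) : list (Ar C) := fst x :: snd x.
Definition oflist (d : Ar C) (l : list (Ar C)) : WOp :=
  match l with [] => (d, []) | x :: xs => (x, xs) end.

Fixpoint postl (x : Ar C) (xs : list (Ar C)) (b : Ar C) : list (Ar C) :=
  match xs with [] => [comp x b] | y :: ys => x :: postl y ys b end.

(* (w0-...-wn) o_(i+1) (u0-...-um)
   = w0-...-w_(i-1)-(w_i u0)-u1-...-u_(m-1)-(u_m w_(i+1))-w_(i+2)-...-wn *)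
Definition Wcomp (g : WOp) (i : nat) (h : WOp) : WOp :=
  let W := tolist g in
  let d := fst g in
  oflist d (firstn i W ++
            postl (comp (nth i W d) (fst h)) (snd h) (nth (S i) W d) ++
            skipn (S (S i)) W).

Definition Wop : OperadData := {|
  Col := (Ob C * Ob C)%type;
  Opr := WOp;
  out := Wout;
  ins := Wins;
  oid := Wid;
  ocomp := Wcomp
|}.
End Spliced.

Definition Wfun (Q C : CatData) (p : CatFunData Q C) : OpFunData (Wop Q) (Wop C) := {|
  fc := (fun c : Ob Q * Ob Q => (fo p (fst c), fo p (snd c))) : Col (Wop Q) -> Col (Wop C);
  fop := (fun x : WOp Q => (fa p (fst x), map (fa p) (snd x))) : Opr (Wop Q) -> Opr (Wop C)
|}.

From Stdlib Require Import List Lia.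
Import ListNotations.

(* An operation w0-...-wn of W(C) is a nonempty sequence of arrows, and g o_i h splices the
   sequence H of h into the i-th gap of g: writing g = A ++ B with |A| = i+1, it is
   splice (splice A H) B, where splice X Y concatenates X and Y after composing the last arrow
   of X with the first arrow of Y.  The operad axioms of W(C) thus reduce to the associativity
   and unit laws of splice, which are those of C.  Since splice changes only the arrow at the
   seam, a factorization of W(p)(alpha) lifts arrow by arrow, and uniquely, by the ULF
   property of p; the fibres of W(p) are finite products of fibres of p.  Finally, constants
   of W(Q) of colour (q0, qf) are one-arrow sequences q0 -> qf, so both automata accept the
   same arrows. *)

Lemma app_inj_length {T : Type} (l1 l2 l1' l2' : list T) :
  length l1 = length l1' -> l1 ++ l2 = l1' ++ l2' -> l1 = l1' /\ l2 = l2'.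
Proof.
  revert l1'. induction l1 as [|x l1 IH]; intros [|x' l1'] L E; try discriminate.
  - split; [reflexivity | exact E].
  - injection L as L. injection E as -> E.
    destruct (IH l1' L E) as [-> ->]. split; reflexivity.
Qed.

Lemma firstn_skipn_middle {T : Type} (l l' : list T) x :
  firstn (length l) (l ++ x :: l') = l /\ skipn (S (length l)) (l ++ x :: l') = l'.
Proof.
  induction l as [|y l [IH1 IH2]]; simpl; [split; reflexivity|].
  rewrite IH1. split; [reflexivity | exact IH2].
Qed.

Lemma app_cons2_slices {T : Type} (l l' : list T) x y d :
  firstn (length l) (l ++ x :: y :: l') = l /\ nth (length l) (l ++ x :: y :: l') d = x /\
  nth (S (length l)) (l ++ x :: y :: l') d = y /\
  skipn (S (S (length l))) (l ++ x :: y :: l') = l'.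
Proof.
  induction l as [|z l IH]; simpl; [repeat split|].
  destruct IH as (E1 & E2 & E3 & E4). rewrite E1. repeat split; assumption.
Qed.

Definition finite_fibers {A B : Type} (f : A -> B) : Prop :=
  forall b, exists l, forall a, f a = b -> In a l.

Lemma finite_fibers_map {A B : Type} (f : A -> B) :
  finite_fibers f -> finite_fibers (map f).
Proof.
  intros Hf bs. induction bs as [|b bs [ll Hll]].
  - exists [[]]. intros [|a As] E; [left; reflexivity | discriminate].
  - destruct (Hf b) as [l Hl].
    exists (map (fun aAs => fst aAs :: snd aAs) (list_prod l ll)).
    intros [|a As] E; [discriminate|]. injection E as Ea EAs.
    apply (in_map (fun aAs => fst aAs :: snd aAs) _ (a, As)), in_prod; auto.
Qed.

Lemma finite_fibers_pair {A B A' B' : Type} (f : A -> A') (g : B -> B') :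
  finite_fibers f -> finite_fibers g ->
  finite_fibers (fun x : A * B => (f (fst x), g (snd x))).
Proof.
  intros Hf Hg [a' b']. destruct (Hf a') as [la Hla], (Hg b') as [lb Hlb].
  exists (list_prod la lb). intros [a b] E. injection E as Ea Eb. apply in_prod; auto.
Qed.

Section SplicedArrows.

Context {C : CatData}.
Implicit Types (X Y Z A B : list (Ar C)) (x y f g h : Ar C).

Fixpoint splice X Y : list (Ar C) :=
  match X with
  | [] => Y
  | [x] => match Y with [] => [x] | y :: Y' => comp x y :: Y' end
  | x :: X' => x :: splice X' Y
  end.

(* As lsrc [] = ltgt [] = None, a hypothesis [ltgt X = lsrc Y] also forces X and Y to be
   both empty or both nonempty; this is why few lemmas below assume nonemptiness. *)
Definition lsrc X : option (Ob C) :=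
  match X with [] => None | x :: _ => Some (src x) end.

Definition ltgt X : option (Ob C) :=
  match X with [] => None | x :: X' => Some (tgt (last_ar C x X')) end.

Definition gaps X : list (Ob C * Ob C) :=
  match X with [] => [] | x :: X' => ins_aux C x X' end.

Lemma splice_cons x X Y : X <> [] -> splice (x :: X) Y = x :: splice X Y.
Proof. destruct X; [congruence | reflexivity]. Qed.

Lemma ltgt_cons x X : X <> [] -> ltgt (x :: X) = ltgt X.
Proof. destruct X; [congruence | reflexivity]. Qed.

Lemma gaps_cons x X s : lsrc X = Some s -> gaps (x :: X) = (tgt x, s) :: gaps X.
Proof. destruct X; [discriminate | injection 1 as <-; reflexivity]. Qed.

Lemma lsrc_app X Y : X <> [] -> lsrc (X ++ Y) = lsrc X.
Proof. destruct X; [congruence | reflexivity]. Qed.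

Lemma ltgt_app X Y : Y <> [] -> ltgt (X ++ Y) = ltgt Y.
Proof.
  intros HY. induction X as [|x X IH]; [reflexivity|].
  simpl app. rewrite ltgt_cons; [exact IH|]. destruct X; simpl; congruence.
Qed.

Lemma splice_neq_nil_l X Y : X <> [] -> splice X Y <> [].
Proof. destruct X as [|x [|x' X]]; [congruence | destruct Y | ]; simpl; congruence. Qed.

Lemma splice_neq_nil_r X Y : Y <> [] -> splice X Y <> [].
Proof. intros HY. destruct X as [|x X]; [exact HY | apply splice_neq_nil_l; congruence]. Qed.

Lemma splice_app_l A B Y : B <> [] -> splice (A ++ B) Y = A ++ splice B Y.
Proof.
  intros HB. induction A as [|a A IH]; [reflexivity|].
  simpl app. rewrite splice_cons, IH; [reflexivity|]. destruct A; simpl; congruence.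
Qed.

Lemma splice_app_r X Y1 Y2 : Y1 <> [] -> splice X (Y1 ++ Y2) = splice X Y1 ++ Y2.
Proof.
  intros HY. induction X as [|x [|x' X] IH]; [reflexivity | destruct Y1; [congruence | reflexivity] |].
  rewrite !(splice_cons x), IH by congruence. reflexivity.
Qed.

Lemma postl_splice x X y : postl C x X y = splice (x :: X) [y].
Proof.
  revert x. induction X as [|x' X IH]; intros x; [reflexivity|].
  rewrite splice_cons by congruence. simpl. rewrite IH. reflexivity.
Qed.

Lemma length_splice X Y : ltgt X = lsrc Y -> length (splice X Y) = length X + length Y - 1.
Proof.
  induction X as [|x [|x' X] IH]; intros E.
  - destruct Y; [reflexivity | discriminate].
  - destruct Y; [discriminate | simpl; lia].
  - rewrite ltgt_cons in E by congruence. rewrite splice_cons by congruence.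
    cbn [length]. rewrite (IH E). simpl. lia.
Qed.

Lemma gaps_app A B a b :
  ltgt A = Some a -> lsrc B = Some b -> gaps (A ++ B) = gaps A ++ (a, b) :: gaps B.
Proof.
  intros EA EB. induction A as [|x [|x' A] IH]; [discriminate| |].
  - injection EA as <-. destruct B; [discriminate | injection EB as <-; reflexivity].
  - rewrite ltgt_cons in EA by congruence.
    change ((x :: x' :: A) ++ B) with (x :: (x' :: A) ++ B).
    rewrite (gaps_cons x _ (src x')), (IH EA) by reflexivity. reflexivity.
Qed.

Lemma length_gaps X : length (gaps X) = length X - 1.
Proof.
  destruct X as [|x X]; [reflexivity|]. simpl. revert x.
  induction X as [|x' X IH]; intros x; simpl; [reflexivity | rewrite IH; lia].
Qed.

Hypothesis HC : IsCategory C.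

Lemma comp_ends {f g} : tgt f = src g -> src (comp f g) = src f /\ tgt (comp f g) = tgt g.
Proof. destruct HC as (_ & Hends & _). apply Hends. Qed.

Lemma comp_assoc f g h :
  tgt f = src g -> tgt g = src h -> comp (comp f g) h = comp f (comp g h).
Proof. destruct HC as (_ & _ & _ & _ & Hassoc). apply Hassoc. Qed.

Lemma lsrc_splice X Y : ltgt X = lsrc Y -> lsrc (splice X Y) = lsrc X.
Proof.
  destruct X as [|x [|x' X]]; intros E; [destruct Y; [reflexivity | discriminate] | | reflexivity].
  destruct Y as [|y Y]; [discriminate|]. injection E as E.
  simpl. rewrite (proj1 (comp_ends E)). reflexivity.
Qed.

Lemma ltgt_splice X Y : ltgt X = lsrc Y -> ltgt (splice X Y) = ltgt Y.
Proof.
  induction X as [|x [|x' X] IH]; intros E; [reflexivity | |].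
  - destruct Y as [|y [|y' Y]]; [discriminate | | reflexivity]. injection E as E.
    simpl. rewrite (proj2 (comp_ends E)). reflexivity.
  - rewrite ltgt_cons in E by congruence.
    rewrite splice_cons, ltgt_cons by (try apply splice_neq_nil_l; congruence). exact (IH E).
Qed.

Lemma gaps_splice X Y : ltgt X = lsrc Y -> gaps (splice X Y) = gaps X ++ gaps Y.
Proof.
  induction X as [|x [|x' X] IH]; intros E; [reflexivity | |].
  - destruct Y as [|y [|y' Y]]; [discriminate | reflexivity |]. injection E as E.
    simpl. rewrite (proj2 (comp_ends E)). reflexivity.
  - rewrite ltgt_cons in E by congruence.
    rewrite splice_cons, (gaps_cons x _ (src x')), IH by (try rewrite lsrc_splice; auto; congruence).
    reflexivity.
Qed.

Lemma splice_assoc X Y Z :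
  ltgt X = lsrc Y -> ltgt Y = lsrc Z -> splice (splice X Y) Z = splice X (splice Y Z).
Proof.
  induction X as [|x [|x' X] IH]; intros E1 E2; [reflexivity | |].
  - destruct Y as [|y [|y' Y]]; [discriminate | | reflexivity]. injection E1 as E1.
    destruct Z as [|z Z]; [discriminate|]. injection E2 as E2.
    simpl. rewrite comp_assoc by assumption. reflexivity.
  - rewrite ltgt_cons in E1 by congruence.
    rewrite !(splice_cons x), IH by (try apply splice_neq_nil_l; congruence). reflexivity.
Qed.

Lemma splice_id_l s Y : lsrc Y = Some s -> splice [idc s] Y = Y.
Proof.
  destruct Y as [|y Y]; [discriminate|]. injection 1 as <-.
  destruct HC as (_ & _ & Hidl & _). simpl. rewrite Hidl. reflexivity.
Qed.

Lemma splice_id_r X t : ltgt X = Some t -> splice X [idc t] = X.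
Proof.
  induction X as [|x [|x' X] IH]; intros E; [discriminate | |].
  - injection E as <-. destruct HC as (_ & _ & _ & Hidr & _). simpl. rewrite Hidr. reflexivity.
  - rewrite ltgt_cons in E by congruence. rewrite splice_cons, IH by (congruence || exact E).
    reflexivity.
Qed.

(* Proves [ltgt X = lsrc Y] for splices of blocks whose seams match by hypothesis. *)
Ltac splice_ends :=
  repeat first [ rewrite lsrc_splice by splice_ends | rewrite ltgt_splice by splice_ends ];
  congruence.

Lemma tolist_inj (u v : WOp C) : tolist u = tolist v -> u = v.
Proof. destruct u, v. injection 1 as -> ->. reflexivity. Qed.

Lemma tolist_oflist d X : X <> [] -> tolist (oflist C d X) = X.
Proof. destruct X; [congruence | reflexivity]. Qed.

Lemma length_tolist (u : WOp C) : length (tolist u) = S (length (snd u)).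
Proof. reflexivity. Qed.

Lemma lsrc_tolist (u : WOp C) : lsrc (tolist u) = Some (fst (Wout u)).
Proof. reflexivity. Qed.

Lemma ltgt_tolist (u : WOp C) : ltgt (tolist u) = Some (snd (Wout u)).
Proof. reflexivity. Qed.

Lemma Wins_gaps (u : WOp C) : Wins u = gaps (tolist u).
Proof. reflexivity. Qed.

Lemma Wout_ends (u v : WOp C) :
  lsrc (tolist u) = lsrc (tolist v) -> ltgt (tolist u) = ltgt (tolist v) -> Wout u = Wout v.
Proof.
  destruct u, v. injection 1 as E1. injection 1 as E2. unfold Wout. simpl. congruence.
Qed.

Lemma tolist_split (u : WOp C) i :
  i < length (snd u) -> exists A B, tolist u = A ++ B /\ length A = S i /\ B <> [].
Proof.
  intros Hi. exists (firstn (S i) (tolist u)), (skipn (S i) (tolist u)).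
  split; [symmetry; apply firstn_skipn|]. split.
  - apply firstn_length_le. rewrite length_tolist. lia.
  - intros E. apply (f_equal (@length _)) in E. rewrite length_skipn, length_tolist in E.
    simpl in E. lia.
Qed.

Lemma Wins_split {u : WOp C} {A B i} :
  tolist u = A ++ B -> length A = S i -> B <> [] ->
  exists a b, ltgt A = Some a /\ lsrc B = Some b /\
    Wins u = gaps A ++ (a, b) :: gaps B /\ length (gaps A) = i.
Proof.
  intros Eu LA NB. destruct A as [|x A]; [discriminate|]. destruct B as [|y B]; [congruence|].
  exists (tgt (last_ar C x A)), (src y).
  rewrite Wins_gaps, Eu, (gaps_app _ _ (tgt (last_ar C x A)) (src y)), length_gaps, LA
    by reflexivity.
  repeat split. lia.
Qed.

Lemma Wcomp_split {g : WOp C} (h : WOp C) {A B i} :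
  tolist g = A ++ B -> length A = S i -> B <> [] ->
  tolist (Wcomp g i h) = splice (splice A (tolist h)) B.
Proof.
  intros Eg LA NB.
  destruct (exists_last (l := A)) as (A0 & a & ->); [intros ->; discriminate|].
  destruct B as [|b B]; [congruence|].
  rewrite length_app in LA. simpl in LA. replace i with (length A0) by lia.
  rewrite <- app_assoc in Eg. simpl in Eg.
  destruct (app_cons2_slices A0 B a b (fst g)) as (E1 & E2 & E3 & E4).
  destruct h as [h0 hs]. unfold Wcomp. cbv beta zeta. rewrite Eg, E1, E2, E3, E4.
  change (b :: B) with ([b] ++ B).
  rewrite splice_app_l, (splice_app_l A0), splice_app_r by discriminate.
  change (splice [a] (tolist (h0, hs))) with (comp a h0 :: hs). rewrite <- postl_splice.
  apply tolist_oflist. destruct A0, hs; discriminate.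
Qed.


Lemma W_composable_split {g : WOp C} (h : WOp C) {A B i} :
  tolist g = A ++ B -> length A = S i -> B <> [] ->
  @composable (Wop C) g i h <-> ltgt A = lsrc (tolist h) /\ ltgt (tolist h) = lsrc B.
Proof.
  intros Eg LA NB. destruct (Wins_split Eg LA NB) as (a & b & Ea & Eb & Ei & Li).
  assert (Eab : nth i (Wins g) (Wout h) = (a, b)) by (rewrite Ei, <- Li; apply nth_middle).
  transitivity (i < length (Wins g) /\ Wout h = (a, b)); [rewrite <- Eab; apply iff_refl|].
  rewrite Ea, Eb, lsrc_tolist, ltgt_tolist.
  destruct (Wout h) as [s t]. simpl. split.
  - intros [_ E]. injection E as -> ->. split; reflexivity.
  - intros [E1 E2]. injection E1 as ->. injection E2 as ->.
    rewrite Ei, length_app. simpl. split; [lia | reflexivity].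
Qed.

Lemma W_composable_inv {g h : WOp C} {i} :
  @composable (Wop C) g i h ->
  exists A B, tolist g = A ++ B /\ length A = S i /\ B <> [] /\
    ltgt A = lsrc (tolist h) /\ ltgt (tolist h) = lsrc B.
Proof.
  intros Hc. destruct (tolist_split g i) as (A & B & Eg & LA & NB).
  - destruct Hc as [Hi _]. change (i < length (Wins g)) in Hi.
    rewrite Wins_gaps, length_gaps, length_tolist in Hi. lia.
  - exists A, B. apply (W_composable_split h Eg LA NB) in Hc. tauto.
Qed.

Lemma W_oid_colors (c : Ob C * Ob C) : Wout (Wid C c) = c /\ Wins (Wid C c) = [c].
Proof.
  destruct c as [s t]. destruct HC as (Hid & _).
  destruct (Hid s) as [Hs _], (Hid t) as [Ht' Ht]. unfold Wout, Wins. simpl.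
  rewrite Hs, Ht, (proj2 (Hid s)), Ht'. split; reflexivity.
Qed.

Lemma W_ocomp_colors (g : WOp C) i (h : WOp C) :
  @composable (Wop C) g i h ->
  Wout (Wcomp g i h) = Wout g /\
  Wins (Wcomp g i h) = firstn i (Wins g) ++ Wins h ++ skipn (S i) (Wins g).
Proof.
  intros Hc. destruct (W_composable_inv Hc) as (A & B & Eg & LA & NB & E1 & E2).
  destruct (Wins_split Eg LA NB) as (a & b & Ea & Eb & Ei & Li).
  pose proof (Wcomp_split h Eg LA NB) as Ec.
  split.
  - apply Wout_ends.
    + rewrite Ec, Eg, lsrc_splice, lsrc_splice, lsrc_app by (try splice_ends; intros ->; discriminate).
      reflexivity.
    + rewrite Ec, Eg, ltgt_splice, ltgt_app by splice_ends. reflexivity.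
  - destruct (firstn_skipn_middle (gaps A) (gaps B) (a, b)) as [Ef Es].
    rewrite Li in Ef, Es. rewrite Ei, Ef, Es.
    rewrite !Wins_gaps, Ec, !gaps_splice by splice_ends. symmetry. apply app_assoc.
Qed.

Lemma W_ocomp_id_l (g : WOp C) : Wcomp (Wid C (Wout g)) 0 g = g.
Proof.
  apply tolist_inj. rewrite (Wcomp_split g (A := [idc (fst (Wout g))]) (B := [idc (snd (Wout g))]))
    by (reflexivity || discriminate).
  rewrite splice_id_l, splice_id_r by reflexivity. reflexivity.
Qed.

Lemma W_ocomp_id_r (g : WOp C) i :
  i < length (Wins g) -> Wcomp g i (Wid C (nth i (Wins g) (Wout g))) = g.
Proof.
  intros Hi. rewrite Wins_gaps, length_gaps, length_tolist in Hi.
  destruct (tolist_split g i) as (A & B & Eg & LA & NB); [lia|].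
  destruct (Wins_split Eg LA NB) as (a & b & Ea & Eb & Ei & Li).
  assert (Eab : nth i (Wins g) (Wout g) = (a, b)) by (rewrite Ei, <- Li; apply nth_middle).
  apply tolist_inj. rewrite Eab, (Wcomp_split _ Eg LA NB).
  change (tolist (Wid C (a, b))) with ([idc a] ++ [idc b]).
  rewrite splice_app_r, splice_id_r, splice_app_l, splice_id_l by (assumption || discriminate).
  symmetry. exact Eg.
Qed.


Lemma W_ocomp_assoc (g h k : WOp C) i j :
  @composable (Wop C) g i h -> @composable (Wop C) h j k ->
  Wcomp (Wcomp g i h) (i + j) k = Wcomp g i (Wcomp h j k).
Proof.
  intros Hgh Hhk.
  destruct (W_composable_inv Hgh) as (A & B & Eg & LA & NB & E1 & E2).
  destruct (W_composable_inv Hhk) as (H1 & H2 & Eh & LH1 & NH2 & E3 & E4).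
  assert (NH1 : H1 <> []) by (intros ->; discriminate).
  rewrite Eh, lsrc_app in E1 by exact NH1. rewrite Eh, ltgt_app in E2 by exact NH2.
  assert (Egh : tolist (Wcomp g i h) = splice A H1 ++ splice H2 B).
  { rewrite (Wcomp_split h Eg LA NB), Eh, splice_app_r, splice_app_l by assumption.
    reflexivity. }
  assert (LAH1 : length (splice A H1) = S (i + j)) by (rewrite length_splice by exact E1; lia).
  apply tolist_inj.
  rewrite (Wcomp_split k Egh LAH1), (Wcomp_split _ Eg LA NB), (Wcomp_split k Eh LH1 NH2)
    by (apply splice_neq_nil_r; exact NB).
  rewrite !splice_assoc by splice_ends. reflexivity.
Qed.

Lemma W_ocomp_interchange (g h k : WOp C) i j :
  @composable (Wop C) g i h -> @composable (Wop C) g j k -> i < j ->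
  Wcomp (Wcomp g j k) i h = Wcomp (Wcomp g i h) (j - 1 + length (Wins h)) k.
Proof.
  intros Hgh Hgk Hij.
  destruct (W_composable_inv Hgk) as (AB & D & Eg' & LAB & ND & E3 & E4).
  set (A := firstn (S i) AB). set (B := skipn (S i) AB).
  assert (LA : length A = S i) by (apply firstn_length_le; lia).
  assert (LB : length B = j - i) by (unfold B; rewrite length_skipn; lia).
  assert (NB : B <> []) by (intros E; rewrite E in LB; simpl in LB; lia).
  assert (NBD : B ++ D <> []) by (destruct B; [contradiction | discriminate]).
  assert (EAB : AB = A ++ B) by (symmetry; apply firstn_skipn).
  assert (Eg : tolist g = A ++ B ++ D) by (rewrite app_assoc, <- EAB; exact Eg').
  apply (W_composable_split h Eg LA NBD) in Hgh. destruct Hgh as [E1 E2].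
  rewrite lsrc_app in E2 by exact NB. rewrite EAB, ltgt_app in E3 by exact NB.
  assert (Egk : tolist (Wcomp g j k) = A ++ splice (splice B (tolist k)) D).
  { rewrite (Wcomp_split k Eg' LAB ND), EAB, splice_app_l, splice_app_l by
      (try apply splice_neq_nil_l; assumption).
    reflexivity. }
  assert (Egh : tolist (Wcomp g i h) = splice (splice A (tolist h)) B ++ D).
  { rewrite (Wcomp_split h Eg LA NBD), splice_app_r by exact NB. reflexivity. }
  assert (L : length (splice (splice A (tolist h)) B) = S (j - 1 + length (Wins h))).
  { rewrite !length_splice, Wins_gaps, length_gaps, length_tolist by splice_ends. lia. }
  apply tolist_inj.
  rewrite (Wcomp_split h Egk LA), (Wcomp_split k Egh L ND)
    by (apply splice_neq_nil_l, splice_neq_nil_l; exact NB).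
  rewrite !splice_assoc by splice_ends. reflexivity.
Qed.

Lemma W_operad : IsOperad (Wop C).
Proof.
  split; [exact W_oid_colors|]. split; [exact W_ocomp_colors|].
  split; [exact W_ocomp_id_l|]. split; [exact W_ocomp_id_r|].
  split; [exact W_ocomp_assoc | exact W_ocomp_interchange].
Qed.

End SplicedArrows.

Section SplicedFunctor.

Context {Q C : CatData} (p : CatFunData Q C).
Hypotheses (Hp : IsCatFunctor p) (HQ : IsCategory Q).

Lemma tolist_Wfun (u : WOp Q) : tolist (fop (Wfun p) u) = map (fa p) (tolist u).
Proof. reflexivity. Qed.

Lemma fa_src x : src (fa p x) = fo p (src x).
Proof. apply Hp. Qed.

Lemma fa_tgt x : tgt (fa p x) = fo p (tgt x).
Proof. apply Hp. Qed.

Lemma fa_comp {x y} : tgt x = src y -> fa p (comp x y) = comp (fa p x) (fa p y).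
Proof. destruct Hp as (_ & _ & Hcomp). apply Hcomp. Qed.

Lemma last_ar_map x X : last_ar C (fa p x) (map (fa p) X) = fa p (last_ar Q x X).
Proof. revert x. induction X as [|y X IH]; intros x; [reflexivity | apply IH]. Qed.

Lemma gaps_map X : gaps (map (fa p) X) = map (fc (Wfun p)) (gaps X).
Proof.
  destruct X as [|x X]; [reflexivity|]. simpl. revert x.
  induction X as [|y X IH]; intros x; [reflexivity|].
  simpl. rewrite IH, fa_src, fa_tgt. reflexivity.
Qed.

Lemma map_splice X Y :
  ltgt X = lsrc Y -> map (fa p) (splice X Y) = splice (map (fa p) X) (map (fa p) Y).
Proof.
  induction X as [|x [|x' X] IH]; intros E; [reflexivity | |].
  - destruct Y as [|y Y]; [discriminate|]. injection E as E. simpl. rewrite fa_comp by exact E.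
    reflexivity.
  - rewrite ltgt_cons in E by congruence.
    rewrite splice_cons, map_cons, IH by (exact E || congruence). reflexivity.
Qed.

Lemma W_functor : IsOpFunctor (Wfun p).
Proof.
  split; [|split].
  - intros [x X]. split; [|exact (gaps_map (x :: X))].
    simpl. unfold Wout. simpl. rewrite last_ar_map, fa_src, fa_tgt. reflexivity.
  - intros [s t]. unfold Wfun, Wid; simpl. destruct Hp as (_ & Hid & _). rewrite !Hid. reflexivity.
  - intros g i h Hc. destruct (W_composable_inv Hc) as (A & B & Eg & LA & NB & E1 & E2).
    assert (Eg' : tolist (fop (Wfun p) g) = map (fa p) A ++ map (fa p) B)
      by (rewrite tolist_Wfun, Eg; apply map_app).
    apply tolist_inj.
    change (tolist (fop (Wfun p) (Wcomp g i h)) =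
            tolist (Wcomp (fop (Wfun p) g) i (fop (Wfun p) h))).
    rewrite (Wcomp_split _ Eg'), tolist_Wfun, (Wcomp_split h Eg LA NB).
    + rewrite !map_splice, !tolist_Wfun by (rewrite ?(ltgt_splice HQ); assumption). reflexivity.
    + rewrite length_map. exact LA.
    + intros E. apply map_eq_nil in E. contradiction.
Qed.

Hypothesis Hu : CatULF p.

Lemma comp_lift_unique {x1 y1 x2 y2} :
  tgt x1 = src y1 -> tgt x2 = src y2 -> fa p x1 = fa p x2 -> fa p y1 = fa p y2 ->
  comp x1 y1 = comp x2 y2 -> x1 = x2 /\ y1 = y2.
Proof.
  intros E1 E2 Ex Ey Exy.
  assert (Euv : tgt (fa p x1) = src (fa p y1)) by (rewrite fa_src, fa_tgt; congruence).
  destruct (Hu (comp x1 y1) _ _ Euv (fa_comp E1)) as [xy [_ Uniq]].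
  assert (U1 : xy = (x1, y1)) by (apply Uniq; simpl; repeat split; congruence).
  assert (U2 : xy = (x2, y2)) by (apply Uniq; simpl; repeat split; congruence).
  rewrite U1 in U2. injection U2 as -> ->. split; reflexivity.
Qed.

Lemma splice_lift X Y Lam :
  ltgt X = lsrc Y -> map (fa p) Lam = splice X Y ->
  exists Xi Ups, ltgt Xi = lsrc Ups /\ Lam = splice Xi Ups /\
    map (fa p) Xi = X /\ map (fa p) Ups = Y.
Proof.
  revert Lam. induction X as [|x [|x' X] IH]; intros Lam E EM.
  - destruct Y; [|discriminate]. exists [], []. apply map_eq_nil in EM. subst Lam.
    repeat split.
  - destruct Y as [|y Y]; [discriminate|]. injection E as E.
    destruct Lam as [|l Lam]; [discriminate|]. injection EM as El EL.
    destruct (Hu l _ _ E El) as [[b c] [(Ebc & Elbc & Eb & Ec) _]]. simpl in *.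
    exists [b], (c :: Lam). repeat split; simpl; congruence.
  - rewrite ltgt_cons in E by congruence. rewrite splice_cons in EM by congruence.
    destruct Lam as [|l Lam]; [discriminate|]. injection EM as El EL.
    destruct (IH Lam E EL) as (Xi & Ups & T & EXi & MXi & MUps).
    assert (NXi : Xi <> []) by (intros ->; discriminate).
    exists (l :: Xi), Ups.
    rewrite ltgt_cons, splice_cons by exact NXi. simpl. repeat split; congruence.
Qed.

Lemma splice_lift_unique X1 Y1 X2 Y2 :
  map (fa p) X1 = map (fa p) X2 -> map (fa p) Y1 = map (fa p) Y2 ->
  ltgt X1 = lsrc Y1 -> ltgt X2 = lsrc Y2 -> splice X1 Y1 = splice X2 Y2 ->
  X1 = X2 /\ Y1 = Y2.
Proof.
  revert X2. induction X1 as [|x1 [|x1' X1] IH]; intros X2 MX MY T1 T2 E.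
  - destruct Y1; [|discriminate]. symmetry in MX, MY.
    apply map_eq_nil in MX, MY. split; congruence.
  - destruct X2 as [|x2 [|x2' X2]]; try discriminate. injection MX as Mx.
    destruct Y1 as [|y1 Y1]; [discriminate|]. destruct Y2 as [|y2 Y2]; [discriminate|].
    injection MY as My MY. injection T1 as T1. injection T2 as T2. injection E as Exy E.
    destruct (comp_lift_unique T1 T2 Mx My Exy) as [-> ->]. split; congruence.
  - destruct X2 as [|x2 X2]; [discriminate|]. injection MX as Mx MX.
    assert (NX2 : X2 <> []) by (intros ->; discriminate).
    rewrite ltgt_cons in T1, T2 by congruence. rewrite (splice_cons x1), (splice_cons x2) in E by congruence.
    injection E as -> E. destruct (IH _ MX MY T1 T2 E) as [-> ->]. split; reflexivity.
Qed.

Hypothesis HC : IsCategory C.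

Lemma W_lift_exists (alpha : WOp Q) (g h : WOp C) i :
  @composable (Wop C) g i h -> fop (Wfun p) alpha = Wcomp g i h ->
  exists beta gamma, @composable (Wop Q) beta i gamma /\ alpha = Wcomp beta i gamma /\
    fop (Wfun p) beta = g /\ fop (Wfun p) gamma = h.
Proof.
  intros Hc Ea. destruct (W_composable_inv Hc) as (A & B & Eg & LA & NB & E1 & E2).
  assert (Em : map (fa p) (tolist alpha) = splice (splice A (tolist h)) B)
    by (rewrite <- tolist_Wfun, Ea; exact (Wcomp_split h Eg LA NB)).
  destruct (splice_lift _ _ _ (eq_trans (ltgt_splice HC _ _ E1) E2) Em)
    as (Xi & UB & T2 & Ealpha & M1 & M2).
  destruct (splice_lift _ _ _ E1 M1) as (XA & XH & T1 & EXi & M3 & M4).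
  assert (NXH : XH <> []) by (intros ->; discriminate).
  assert (NUB : UB <> []) by (intros ->; subst B; contradiction).
  assert (LXA : length XA = S i) by (rewrite <- LA, <- M3; symmetry; apply length_map).
  exists (oflist Q (fst alpha) (XA ++ UB)), (oflist Q (fst alpha) XH).
  assert (Eb : tolist (oflist Q (fst alpha) (XA ++ UB)) = XA ++ UB)
    by (apply tolist_oflist; destruct XA; discriminate).
  assert (Ec : tolist (oflist Q (fst alpha) XH) = XH) by (apply tolist_oflist, NXH).
  split; [|split; [|split]].
  - apply (W_composable_split _ Eb LXA NUB). rewrite Ec.
    split; [exact T1 | rewrite <- (ltgt_splice HQ _ _ T1), <- EXi; exact T2].
  - apply tolist_inj. rewrite (Wcomp_split _ Eb LXA NUB), Ec, <- EXi. exact Ealpha.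
  - apply tolist_inj. rewrite tolist_Wfun, Eb, map_app, M3, M2. symmetry. exact Eg.
  - apply tolist_inj. rewrite tolist_Wfun, Ec. exact M4.
Qed.

Lemma W_lift_unique (b1 c1 b2 c2 : WOp Q) i :
  @composable (Wop Q) b1 i c1 -> @composable (Wop Q) b2 i c2 ->
  Wcomp b1 i c1 = Wcomp b2 i c2 ->
  fop (Wfun p) b1 = fop (Wfun p) b2 -> fop (Wfun p) c1 = fop (Wfun p) c2 ->
  b1 = b2 /\ c1 = c2.
Proof.
  intros Hc1 Hc2 E Eb Ec.
  destruct (W_composable_inv Hc1) as (A1 & B1 & E1 & L1 & N1 & S1 & T1).
  destruct (W_composable_inv Hc2) as (A2 & B2 & E2 & L2 & N2 & S2 & T2).
  apply (f_equal (@tolist Q)) in E. apply (f_equal (@tolist C)) in Eb, Ec.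
  rewrite !tolist_Wfun in Eb, Ec. rewrite E1, E2, !map_app in Eb.
  rewrite (Wcomp_split _ E1 L1 N1), (Wcomp_split _ E2 L2 N2) in E.
  assert (LM : length (map (fa p) A1) = length (map (fa p) A2))
    by (rewrite !length_map; congruence).
  destruct (app_inj_length _ _ _ _ LM Eb) as [MA MB].
  assert (MAC : map (fa p) (splice A1 (tolist c1)) = map (fa p) (splice A2 (tolist c2)))
    by (rewrite !map_splice by assumption; congruence).
  destruct (splice_lift_unique _ _ _ _ MAC MB (eq_trans (ltgt_splice HQ _ _ S1) T1)
              (eq_trans (ltgt_splice HQ _ _ S2) T2) E) as [EAC EB].
  destruct (splice_lift_unique _ _ _ _ MA Ec S1 S2 EAC) as [EA EC].
  split; apply tolist_inj; congruence.
Qed.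

Lemma W_ulf : OpULF (Wfun p).
Proof.
  intros alpha g h i Hc Ea.
  destruct (W_lift_exists alpha g h i Hc Ea) as (beta & gamma & Hbg & Ebg & Eb & Eg).
  exists (beta, gamma). split; [exact (conj Hbg (conj Ebg (conj Eb Eg)))|].
  intros [b c] (Hbc & Ebc & Eb' & Eg').
  destruct (W_lift_unique beta gamma b c i Hbg Hbc (eq_trans (eq_sym Ebg) Ebc)
              (eq_trans Eb (eq_sym Eb')) (eq_trans Eg (eq_sym Eg'))) as [-> ->].
  reflexivity.
Qed.

End SplicedFunctor.

Lemma W_fin {Q C : CatData} (p : CatFunData Q C) : CatFinitary p -> OpFinitary (Wfun p).
Proof.
  intros [Ho Ha]. split.
  - exact (finite_fibers_pair (fo p) (fo p) Ho Ho).
  - exact (finite_fibers_pair (fa p) (map (fa p)) Ha (finite_fibers_map _ Ha)).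
Qed.

Theorem mainTheorem6 (M : CatNFA) :
  IsOpNFA (Wfun (np M)) (nq0 M, nqf M) /\
  (forall x : Opr (Wop (nC M)),
     op_lang (Wfun (np M)) (nq0 M, nqf M) x <->
     exists f : Ar (nC M), cat_lang M f /\ x = (f, [])).
Proof.
  destruct M as [C Q p HC HQ Hp Hu Hf q0 qf]; unfold op_lang, cat_lang; simpl.
  split.
  - exact (conj (W_operad HC) (conj (W_operad HQ) (conj (W_functor p Hp HQ)
             (conj (W_ulf p Hp HQ Hu HC) (W_fin p Hf))))).
  - intros x. split.
    + intros [[a [|a' As]] [Hins [Hout <-]]]; [|discriminate].
      injection Hout as Hs Ht. exists (fa p a). split; [exists a; auto | reflexivity].
    + intros [f [[a (Hs & Ht & <-)] ->]]. exists (a, []).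
      split; [reflexivity|]. split; [unfold Wout; simpl; congruence | reflexivity].
Qed.
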